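(* Let $R$ be a strict triangular $\mathcal{B}$-module algebra. Symmetric functions are quasi-symmetric: there is a canonical inclusion $\mathrm{Sym}_\infty(R)\subset\mathrm{QSym}(R)$ inside $R[[x_1,x_2,\ldots]]$.
   Context: All rings graded, power series implicitly completed. $\mathcal{B}=\mathbb{Z}\langle\phi_1,\phi_2,\ldots\rangle$ ($\phi_0=1$) is the Brouder–Frabetti–Krattenthaler Hopf algebra. A $\mathcal{B}$-module algebra $R$ is a ring with left $\mathcal{B}$-action satisfying $\phi(ab)=\sum\phi'(a)\phi''(b)$; $T=R[[x]]$ is the free left $R$-module on $x^k$ with product extending $R$'s and $xr=\sum_k\phi_k(r)x^{1+k}$. A triangular structure is an $R$-bilinear involution $\Upsilon$ of $T\otimes_RT$ satisfying the Yang–Baxter equation and compatible with multiplication and unit (as in braided Hopf algebras), given by a commutation rule $yx=\sum_{i,j\ge0}\Upsilon_{i,j}x^{1+i}y^{1+j}$ in $T\otimes_RT=R[[x,y]]$; strict means $\Upsilon_{0,0}=1$, $\Upsilon_{k,0}=0$ ($k\ge1$). It makes $R[[x_1,x_2,\ldots]]$ (limit of $T^{\otimes_Rn}$) an algebra with $x_jr=\sum\phi_k(r)x_j^{1+k}$ and $x_lx_k=\sum\Upsilon_{i,j}x_k^{1+i}x_l^{1+j}$ for $l>k$, and symmetric groups act with adjacent transpositions acting by $\Upsilon$; $\mathrm{Sym}_\infty(R)$ is the ring of invariant (symmetric) functions. For a composition $I=(i_1,\ldots,i_n)$ put $m_I=\sum_{k_1<\cdots<k_n}x_{k_1}^{i_1}\cdots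 x_{k_n}^{i_n}$; $\mathrm{QSym}(R)$ is the (completed) left $R$-module spanned freely by the $m_I$, a subalgebra of $R[[x_1,x_2,\ldots]]$. *)

From HB Require Import structures.
From mathcomp Require Import all_boot all_order all_algebra.
Set Implicit Arguments. Unset Strict Implicit. Unset Printing Implicit Defensive.
Import GRing.Theory.
Local Open Scope ring_scope.

(*  - A power series in one variable over R is a coefficient family         *)
(*    nat -> R  (left coefficients: sum_a G a * x^a).                       *)
(*  - T (x) T = R[[x,y]] : nat -> nat -> R, G a b is the left coefficient   *)
(*    of x^a (x) x^b = x^a y^b.   T^(3) : nat -> nat -> nat -> R.           *)
(*  - R[[x_1,x_2,...]] : seq nat -> R, the coefficient of the normal        *)
(*    monomial x_1^(e_0) x_2^(e_1) ... ; trailing zeros in e are irrelevant *)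
(*    (we always read coefficients through [canon]).                        *)
(*  - phi : nat -> R -> R is the action of phi_0, phi_1, ... of B.          *)
(*  - A left-R-linear continuous map Upsilon of T (x)_R T is given by its   *)
(*    matrix U: Upsilon(x^a (x) x^b) = sum_{p,q} U a b p q x^p (x) x^q,     *)
(*    together with a modulus of continuity Ubd (for each target (p,q)     *)
(*    only sources a,b < Ubd p q contribute), which makes all the           *)
(*    (completed) sums below finite.                                       *)

Section Defs.
Variable R : pzRingType.

(* (phi^m)_j = sum_{i_1+...+i_m = j} phi_{i_1} o ... o phi_{i_m} in B *)
Fixpoint phiw (phi : nat -> R -> R) (m j : nat) (s : R) : R :=
  match m with
  | 0 => if j == 0%N then s else 0
  | m'.+1 => \sum_(i < j.+1) phi i (phiw phi m' (j - i) s)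
  end.

(* B-module algebra: phi_0 acts as the identity, each phi_k is additive,
   phi(rs) = sum phi'(r) phi''(s) with the BFK coproduct
   Delta(phi_n) = sum_k phi_k (x) (phi^(k+1))_(n-k)  (the convention forced
   by  x r = sum_k phi_k(r) x^(1+k)  making T associative),
   and phi(1) = eps(phi) 1. *)
Definition B_module_algebra (phi : nat -> R -> R) : Prop :=
  [/\ forall r, phi 0%N r = r,
      forall k, {morph phi k : u v / u + v},
      forall n r s, phi n (r * s) =
          \sum_(k < n.+1) phi k r * phiw phi k.+1 (n - k) s
    & forall n, (0 < n)%N -> phi n 1 = 0].

(* coefficient of x^t in x^a r  (in T = R[[x]]) *)
Fixpoint xmul (phi : nat -> R -> R) (a : nat) (r : R) (t : nat) : R :=
  match a with
  | 0 => if t == 0%N then r else 0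
  | a'.+1 => \sum_(m < t) phi (t - m.+1)%N (xmul phi a' r m)
  end.

(* coefficient of x_1^(h_0)...x_n^(h_(n-1)) in x_1^(g_0)...x_n^(g_(n-1)) r *)
Fixpoint xmulv (phi : nat -> R -> R) (g : seq nat) (r : R) (h : seq nat) : R :=
  match g, h with
  | [::], [::] => r
  | a :: g', t :: h' => xmul phi a (xmulv phi g' r h') t
  | _, _ => 0
  end.

Variables (phi : nat -> R -> R) (U : nat -> nat -> nat -> nat -> R)
          (Ubd : nat -> nat -> nat).

Definition Ups (G : nat -> nat -> R) (p q : nat) : R :=
  \sum_(a < Ubd p q) \sum_(b < Ubd p q) G a b * U a b p q.

Definition rmul2 (G : nat -> nat -> R) (r : R) (p q : nat) : R :=
  \sum_(s < p.+1) \sum_(t < q.+1) G s t * xmulv phi [:: (s : nat); (t : nat)] r [:: p; q].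

Definition Y12 (F : nat -> nat -> nat -> R) (p q c : nat) : R :=
  \sum_(a < Ubd p q) \sum_(b < Ubd p q) F a b c * U a b p q.
Definition Y23 (F : nat -> nat -> nat -> R) (p q r : nat) : R :=
  \sum_(a < p.+1) \sum_(b < Ubd q r) \sum_(c < Ubd q r)
     F a b c * xmul phi a (U b c q r) p.

Definition mu12 (F : nat -> nat -> nat -> R) (n c : nat) : R :=
  \sum_(a < n.+1) F a (n - a)%N c.
Definition mu23 (F : nat -> nat -> nat -> R) (a n : nat) : R :=
  \sum_(b < n.+1) F a b (n - b)%N.

Definition unitL (G : nat -> R) (a b : nat) : R := if a == 0%N then G b else 0.
Definition unitR (G : nat -> R) (a b : nat) : R := if b == 0%N then G a else 0.

Definition triangular_structure : Prop :=
  (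
      (forall a b p q, U a b p q != 0 -> (a < Ubd p q)%N && (b < Ubd p q)%N) /\
      (* R-bilinear (left linearity is built into the matrix form) *)
      (forall G r p q, Ups (rmul2 G r) p q = rmul2 (Ups G) r p q) /\
      (forall G p q, Ups (Ups G) p q = G p q) /\
      (forall F p q r, Y12 (Y23 (Y12 F)) p q r = Y23 (Y12 (Y23 F)) p q r) /\
      ((forall F p q, Ups (mu12 F) p q = mu23 (Y12 (Y23 F)) p q) /\
      (forall F p q, Ups (mu23 F) p q = mu12 (Y23 (Y12 F)) p q)) /\
      ((forall G p q, Ups (unitL G) p q = unitR G p q) /\
      (forall G p q, Ups (unitR G) p q = unitL G p q)) /\ (* given by a commutation rule  yx = sum Ups_{ij} x^(1+i) y^(1+j) *)
      (forall p q, (p == 0%N) || (q == 0%N) -> U 1 1 p q = 0)).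

(* Ups_{i,j} := coefficient of x^(1+i) y^(1+j) in yx *)
Definition Upsij (i j : nat) : R := U 1 1 i.+1 j.+1.

Definition strict_triangular : Prop :=
  triangular_structure /\
  (Upsij 0 0 = 1 /\ forall k, (0 < k)%N -> Upsij k 0 = 0).

Fixpoint canon (e : seq nat) : seq nat :=
  match e with
  | [::] => [::]
  | a :: e' => let c := canon e' in
               if (a == 0%N) && (c == [::]) then [::] else a :: c
  end.

Definition coef (f : seq nat -> R) (e : seq nat) : R := f (canon e).

Fixpoint box (h : seq nat) : seq (seq nat) :=
  match h with
  | [::] => [:: [::]]
  | c :: h' => flatten [seq [seq j :: g | g <- box h'] | j <- iota 0 c.+1]
  end.

(* action of the adjacent transposition s_(i+1) (exchanging the variables
   x_(i+1), x_(i+2)) by Upsilon on the factors i+1, i+2 *)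
Definition sact (i : nat) (f : seq nat -> R) (h : seq nat) : R :=
  let hh := h ++ nseq i.+2 0%N in
  let lo := take i hh in
  let p := nth 0%N hh i in
  let q := nth 0%N hh i.+1 in
  let hi := drop i.+2 hh in
  \sum_(g <- box lo) \sum_(a < Ubd p q) \sum_(b < Ubd p q)
     coef f (g ++ (a : nat) :: (b : nat) :: hi) * xmulv phi g (U a b p q) lo.

(* Sym_infty(R): invariant under the whole S_infty, i.e. under all the
   adjacent transpositions generating it *)
Definition in_Sym (f : seq nat -> R) : Prop :=
  forall i e, coef (sact i f) e = coef f e.

Fixpoint compsF (fuel n : nat) : seq (seq nat) :=
  match fuel with
  | 0 => if n == 0%N then [:: [::]] else [::]
  | fuel'.+1 => if n == 0%N then [:: [::]] else
      flatten [seq [seq k :: J | J <- compsF fuel' (n - k)] | k <- iota 1 n]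
  end.
Definition comps (n : nat) : seq (seq nat) := compsF n n.

(* m_I = sum_{k_1<...<k_n} x_{k_1}^{i_1} ... x_{k_n}^{i_n} *)
Definition mono (J : seq nat) (e : seq nat) : R :=
  if [seq a <- e | a != 0%N] == J then 1 else 0.

(* sum_I c_I m_I  (completed; m_I is homogeneous of degree |I|, so only
   compositions of the degree of e contribute to the coefficient of x^e) *)
Definition qsym_comb (c : seq nat -> R) (e : seq nat) : R :=
  \sum_(J <- comps (sumn e)) c J * mono J e.

Definition in_QSym (f : seq nat -> R) : Prop :=
  exists c : seq nat -> R, forall e, coef f e = coef (qsym_comb c) e.

End Defs.

From mathcomp Require Import all_boot all_order all_algebra zify.
Set Implicit Arguments. Unset Strict Implicit. Unset Printing Implicit Defensive.
Import GRing.Theory.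
Local Open Scope ring_scope.

(* Unit compatibility gives
   Upsilon(1 (x) x^b) = x^b (x) 1, and peeling one factor x off x^a with the
   multiplication compatibility shows, by induction on b and then a, that
   Upsilon(x^a (x) x^b) has no component in T (x) 1 when a > 0.  Hence the
   transposition s_i acts on a monomial with a zero exponent at position i+1
   by merely swapping the two exponents, so the coefficient of x^e in a
   symmetric f is unchanged when a zero exponent is moved to the end: it
   only depends on the composition obtained by deleting the zeros of e,
   which is quasi-symmetry. *)

Section Sums.
Variable R : pzRingType.

Definition delta2 (a0 b0 : nat) : nat -> nat -> R :=
  fun a b => ((a == a0) && (b == b0))%:R.

Definition delta3 (a0 b0 c0 : nat) : nat -> nat -> nat -> R :=
  fun a b c => [&& a == a0, b == b0 & c == c0]%:R.

Lemma sum_delta2 N a0 b0 (H : nat -> nat -> R) :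
  (H a0 b0 != 0 -> (a0 < N)%N && (b0 < N)%N) ->
  \sum_(a < N) \sum_(b < N) delta2 a0 b0 a b * H a b = H a0 b0.
Proof.
move=> H_range.
transitivity (\sum_(a < N | a == a0 :> nat) \sum_(b < N | b == b0 :> nat) H a b).
  rewrite [RHS]big_mkcond; apply: eq_bigr => a _.
  rewrite [in RHS]big_mkcond /delta2.
  case: eqP => _; last by rewrite big1 // => b _; rewrite mul0r.
  by apply: eq_bigr => b _; rewrite mulr_natl mulrb.
rewrite (big_ord1_eq _ (fun a => \sum_(b < N | b == b0 :> nat) H a b)).
rewrite (big_ord1_eq _ (H a0)).
have [/andP[-> ->] // | out_of_range] := boolP ((a0 < N)%N && (b0 < N)%N).
have /eqP -> : H a0 b0 == 0 by apply: contraR out_of_range.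
by rewrite !if_same.
Qed.

Lemma sum_antidiag_delta n i j :
  \sum_(k < n.+1) ((k == i :> nat) && (n - k == j)%N)%:R = (n == i + j)%N%:R :> R.
Proof.
transitivity (\sum_(k < n.+1 | k == i :> nat) ((n - i == j)%N%:R : R)).
  by rewrite [RHS]big_mkcond; apply: eq_bigr => k _; case: eqP => [->|].
rewrite (big_ord1_eq _ (fun=> (n - i == j)%N%:R)) ltnS.
have [le_in|lt_ni] := leqP i n; first by congr (_ %:R); apply/eqP/eqP; lia.
by rewrite (_ : (n == i + j)%N = false) //; apply/eqP; lia.
Qed.

Lemma sum_seq_mul_eq (T : eqType) (s : seq T) (F : T -> R) x :
  \sum_(y <- s) F y * (y == x)%:R = F x *+ count_mem x s.
Proof.
elim: s => [|y s IH]; first by rewrite big_nil.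
rewrite big_cons IH /= eq_sym.
by case: eqP => [->|_]; rewrite ?mulr1 ?mulr0 ?add0r ?mulrS.
Qed.

End Sums.

Arguments delta2 {R}.
Arguments delta3 {R}.

Lemma count_flatten_cons (s : seq nat) (L : nat -> seq (seq nat)) c h :
  count_mem (c :: h) (flatten [seq [seq j :: g | g <- L j] | j <- s])
  = (count_mem c s * count_mem h (L c))%N.
Proof.
elim: s => [|j s IH] //=; rewrite count_cat IH count_map mulnDl; congr (_ + _)%N.
have [->|ne] := eqVneq j c; rewrite ?mul1n ?mul0n.
  by apply: eq_count => g /=; rewrite eqseq_cons eqxx.
rewrite (eq_count (a2 := pred0)) ?count_pred0 // => g /=.
by rewrite eqseq_cons (negbTE ne).
Qed.

Lemma count_box (h : seq nat) : count_mem h (box h) = 1%N.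
Proof.
elim: h => [|c h IH] //.
change (box (c :: h)) with (flatten [seq [seq j :: g | g <- box h] | j <- iota 0 c.+1]).
rewrite (count_flatten_cons _ (fun=> box h)) IH muln1.
by rewrite count_uniq_mem ?iota_uniq // mem_iota add0n ltnSn.
Qed.

Lemma count_comps (s : seq nat) :
  all (leq 1) s -> count_mem s (comps (sumn s)) = 1%N.
Proof.
rewrite /comps; move: {2 3}(sumn s) (leqnn (sumn s)) => fuel.
elim: fuel s => [|fuel IH] [|x s] //=; first by move=> le /andP[]; lia.
move=> le /andP[x_pos s_pos].
rewrite ifF; last by apply/negbTE; lia.
rewrite (count_flatten_cons _ (fun k => compsF fuel (x + sumn s - k))).
rewrite count_uniq_mem ?iota_uniq // mem_iota x_pos addKn IH //; lia.
Qed.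

Lemma canon_nseq0 k : canon (nseq k 0%N) = [::].
Proof. by elim: k => //= k ->. Qed.

Lemma canon_cat_nseq0 s k : canon (s ++ nseq k 0%N) = canon s.
Proof. by elim: s => [|x s /= ->]; first exact: canon_nseq0. Qed.

Lemma canon_pad e : exists k, canon e ++ nseq k 0%N = e.
Proof.
elim: e => [|a e [k Ek]]; first by exists 0%N.
rewrite /=; case: eqP => [a0|_] /=; last by exists k; rewrite /= Ek.
case: eqP => [c0|_]; last by exists k; rewrite /= Ek.
by exists k.+1; rewrite /= a0 -Ek c0.
Qed.

Lemma filter_canon e : [seq x <- canon e | x != 0%N] = [seq x <- e | x != 0%N].
Proof.
have [k Ek] := canon_pad e.
by rewrite -[in RHS]Ek filter_cat filter_nseq cats0.
Qed.

Lemma sumn_canon e : sumn (canon e) = sumn e.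
Proof.
have [k Ek] := canon_pad e.
by rewrite -[in RHS]Ek sumn_cat sumn_nseq mul0n addn0.
Qed.

Lemma sumn_filter_neq0 e : sumn [seq x <- e | x != 0%N] = sumn e.
Proof. by elim: e => //= x e IH; case: eqP => [->|_] /=; rewrite IH. Qed.

Lemma all_pos_filter_neq0 e : all (leq 1) [seq x <- e | x != 0%N].
Proof. by rewrite all_filter; apply/allP => x _ /=; rewrite lt0n implybb. Qed.

Lemma coef_cat_nseq0 (R : pzRingType) (f : seq nat -> R) s k :
  coef f (s ++ nseq k 0%N) = coef f s.
Proof. by rewrite /coef canon_cat_nseq0. Qed.

Lemma cat_split2 (T : Type) (x0 : T) (s t lo u : seq T) a b :
  ((size lo).+2 <= size s)%N -> s ++ t = lo ++ a :: b :: u ->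
  [/\ take (size lo) s = lo, nth x0 s (size lo) = a,
      nth x0 s (size lo).+1 = b & drop (size lo).+2 s ++ t = u].
Proof.
move=> le_s E.
have lt_lo : (size lo < size s)%N by apply: leq_trans le_s; rewrite ltnS leqnSn.
split.
- by have := congr1 (take (size lo)) E; rewrite takel_cat ?take_size_cat // ltnW.
- by have := congr1 (nth x0 ^~ (size lo)) E; rewrite /= !nth_cat lt_lo ltnn subnn.
- have := congr1 (nth x0 ^~ (size lo).+1) E.
  by rewrite /= !nth_cat le_s ltnNge leqnSn subSnn.
- have -> : drop (size lo).+2 s ++ t = drop (size lo).+2 (s ++ t).
    rewrite drop_cat; move: le_s; rewrite leq_eqVlt => /orP[/eqP eq_sz|-> //].
    by rewrite eq_sz ltnn subnn drop0 drop_size.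
  by rewrite E -cat_rcons -cat_rcons drop_size_cat // !size_rcons.
Qed.

Section TriangularStructure.
Variable R : pzRingType.
Variables (phi : nat -> R -> R) (U : nat -> nat -> nat -> nat -> R)
          (Ubd : nat -> nat -> nat).

Lemma coef_sact (f : seq nat -> R) lo a b hi :
  coef (sact phi U Ubd (size lo) f) (lo ++ a :: b :: hi) =
  \sum_(g <- box lo) \sum_(x < Ubd a b) \sum_(y < Ubd a b)
    coef f (g ++ (x : nat) :: (y : nat) :: hi) * xmulv phi g (U x y a b) lo.
Proof.
set e := lo ++ _; have [k Ek] := canon_pad e.
set hh := canon e ++ nseq (size lo).+2 0%N.
have le_hh : ((size lo).+2 <= size hh)%N by rewrite size_cat size_nseq leq_addl.
have hh_pad : hh ++ nseq k 0%N = lo ++ a :: b :: (hi ++ nseq (size lo).+2 0%N).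
  by rewrite -catA -nseqD addnC nseqD catA Ek /e -catA.
have [take_hh nth_hh nth1_hh drop_hh] := cat_split2 0%N le_hh hh_pad.
rewrite {1}/coef /sact; cbv beta zeta; rewrite -/hh take_hh nth_hh nth1_hh.
apply: eq_bigr => g _; apply: eq_bigr => x _; apply: eq_bigr => y _.
rewrite -(coef_cat_nseq0 _ _ k) -catA /= drop_hh.
by rewrite -[in RHS](coef_cat_nseq0 _ _ (size lo).+2) -catA.
Qed.

Hypothesis phi0_id : forall r, phi 0 r = r.
Hypothesis phi_additive : forall k, {morph phi k : u v / u + v}.
Hypothesis phi_1 : forall n, (0 < n)%N -> phi n 1 = 0.

Lemma phi_0 k : phi k 0 = 0.
Proof. by apply: (@addrI _ (phi k 0)); rewrite -phi_additive !addr0. Qed.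

Lemma xmul0 a t : xmul phi a 0 t = 0.
Proof.
elim: a t => [|a IH] t /=; first by case: eqP.
by rewrite big1 // => m _; rewrite IH phi_0.
Qed.

Lemma xmul1 a t : xmul phi a 1 t = (a == t)%:R.
Proof.
elim: a t => [|a IH] t /=; first by rewrite eq_sym; case: eqP.
transitivity (\sum_(m < t | m == a :> nat) phi (t - m.+1) 1).
  rewrite [RHS]big_mkcond; apply: eq_bigr => m _.
  by rewrite IH eq_sym; case: eqP => // _; apply: phi_0.
rewrite (big_ord1_eq _ (fun m => phi (t - m.+1) 1)).
have [lt_at|le_ta] := ltnP a t; last by case: eqP le_ta => // <-; rewrite ltnn.
have [t_eq|t_gt] := posnP (t - a.+1).
  have -> : t = a.+1 by lia.
  by rewrite subnn phi0_id eqxx.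
by rewrite phi_1 //; case: eqP t_gt => // <-; rewrite subnn.
Qed.

Lemma xmulv0 g h : xmulv phi g 0 h = 0.
Proof. by elim: g h => [|a g IH] [|t h] //=; rewrite IH xmul0. Qed.

Lemma xmulv1 g h : xmulv phi g 1 h = (g == h)%:R.
Proof.
elim: g h => [|a g IH] [|t h] //=; rewrite IH eqseq_cons.
by case: (g == h); rewrite ?xmul1 ?andbT ?andbF ?xmul0.
Qed.

Hypothesis Ucont :
  forall a b p q, U a b p q != 0 -> (a < Ubd p q)%N && (b < Ubd p q)%N.
Hypothesis Ups_unitL : forall G p q, Ups U Ubd (unitL G) p q = unitR G p q.
Hypothesis Ups_unitR : forall G p q, Ups U Ubd (unitR G) p q = unitL G p q.
Hypothesis Ups_mu12 :
  forall F p q, Ups U Ubd (mu12 F) p q = mu23 (Y12 U Ubd (Y23 phi U Ubd F)) p q.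
Hypothesis Ups_mu23 :
  forall F p q, Ups U Ubd (mu23 F) p q = mu12 (Y23 phi U Ubd (Y12 U Ubd F)) p q.
Hypothesis U11_axis : forall p q, (p == 0%N) || (q == 0%N) -> U 1 1 p q = 0.

Lemma eq_Ups G G' p q : G =2 G' -> Ups U Ubd G p q = Ups U Ubd G' p q.
Proof. by move=> eqG; apply: eq_bigr => a _; apply: eq_bigr => b _; rewrite eqG. Qed.

Lemma Ups_delta2 a b p q : Ups U Ubd (delta2 a b) p q = U a b p q.
Proof. exact: (sum_delta2 (H := fun x y => U x y p q) (@Ucont a b p q)). Qed.

Lemma U_0l b p q : U 0 b p q = ((p == b) && (q == 0%N))%:R.
Proof.
rewrite -Ups_delta2 (@eq_Ups _ (unitL (fun x => (x == b)%:R))).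
  by rewrite Ups_unitL /unitR; case: eqP; rewrite ?andbT ?andbF.
by move=> x y; rewrite /delta2 /unitL; case: eqP.
Qed.

Lemma U_0r a p q : U a 0 p q = ((p == 0%N) && (q == a))%:R.
Proof.
rewrite -Ups_delta2 (@eq_Ups _ (unitR (fun x => (x == a)%:R))).
  by rewrite Ups_unitR /unitL; case: eqP.
by move=> x y; rewrite /delta2 /unitR andbC; case: eqP.
Qed.

Lemma mu23_delta3 a0 b0 c0 a n :
  mu23 (delta3 a0 b0 c0) a n = ((a == a0) && (n == b0 + c0)%N)%:R :> R.
Proof.
rewrite /mu23; under eq_bigr => b _ do rewrite /delta3 -mulnb natrM.
by rewrite -mulr_sumr sum_antidiag_delta -natrM mulnb.
Qed.

Lemma mu12_delta3 a0 b0 c0 n c :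
  mu12 (delta3 a0 b0 c0) n c = ((n == a0 + b0)%N && (c == c0))%:R :> R.
Proof.
rewrite /mu12; under eq_bigr => a _ do rewrite /delta3 andbA -mulnb natrM.
by rewrite -mulr_suml sum_antidiag_delta -natrM mulnb.
Qed.

Lemma Y12_delta3 a0 b0 c0 p q c :
  Y12 U Ubd (delta3 a0 b0 c0) p q c = (c == c0)%:R * U a0 b0 p q.
Proof.
rewrite /Y12; under eq_bigr => a _ do under eq_bigr => b _ do
  rewrite /delta3 andbA -mulnb natrM -mulrA.
rewrite (sum_delta2 (H := fun a b => (c == c0)%:R * U a b p q)) //.
by move=> nz; apply: Ucont; apply: contraNneq nz => ->; rewrite mulr0.
Qed.

Lemma Y23_eq0 F p q r :
  (forall a b c, F a b c != 0 -> U b c q r = 0) -> Y23 phi U Ubd F p q r = 0.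
Proof.
move=> vanish; rewrite /Y23 big1 // => a _; rewrite big1 // => b _.
rewrite big1 // => c _.
by have [->|/vanish ->] := eqVneq (F a b c) 0; rewrite ?mul0r ?xmul0 ?mulr0.
Qed.

Lemma U_pos_col0 a b p : (0 < a)%N -> U a b p 0 = 0.
Proof.
elim: b a p => [|b IHb] a p a_pos.
  by rewrite U_0r [_ == a]eq_sym (gtn_eqF a_pos) andbF.
elim: a a_pos p => [//|a IHa] _ p.
case: a IHa => [_|a IHa].
- have mu23_E : mu23 (delta3 1 1 b) =2 @delta2 R 1 b.+1.
    by move=> x n; rewrite mu23_delta3.
  rewrite -Ups_delta2 -(eq_Ups _ _ mu23_E) Ups_mu23 /mu12 big1 // => k _.
  apply: Y23_eq0 => x y z; rewrite Y12_delta3.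
  have [->|y_pos] := posnP y; first by rewrite U11_axis ?mulr0 ?eqxx // orbT.
  have [->|_] := eqVneq (z : nat) b; first by move=> _; apply: IHb.
  by rewrite mul0r eqxx.
- have mu12_E : mu12 (delta3 1 a.+1 b.+1) =2 @delta2 R a.+2 b.+1.
    by move=> n c; rewrite mu12_delta3.
  rewrite -Ups_delta2 -(eq_Ups _ _ mu12_E) Ups_mu12 /mu23 big1 // => k _.
  rewrite /Y12 big1 // => x _; rewrite big1 // => y _.
  rewrite Y23_eq0 ?mul0r // => x' y' z'.
  rewrite /delta3; case: and3P => [[_ /eqP-> /eqP->] _ | _]; last by rewrite eqxx.
  exact: IHa.
Qed.

Lemma U_col0 a b p : U a b p 0 = ((a == 0%N) && (b == p))%:R.
Proof. by case: a => [|a]; rewrite ?U_0l ?U_pos_col0 // eq_sym andbT. Qed.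

Section Symmetric.
Variable f : seq nat -> R.
Hypothesis f_sym : in_Sym phi U Ubd f.

Lemma coef_swap0 lo a hi :
  coef f (lo ++ a :: 0%N :: hi) = coef f (lo ++ 0%N :: a :: hi).
Proof.
rewrite -(f_sym (size lo)) coef_sact.
transitivity (\sum_(g <- box lo) coef f (g ++ 0%N :: a :: hi) * (g == lo)%:R).
  apply: eq_bigr => g _.
  transitivity (\sum_(x < Ubd a 0) \sum_(y < Ubd a 0)
    delta2 0 a x y * (coef f (g ++ (x : nat) :: (y : nat) :: hi) * (g == lo)%:R)).
    apply: eq_bigr => x _; apply: eq_bigr => y _.
    rewrite U_col0 /delta2 -xmulv1.
    by case: (_ && _); rewrite ?mul1r ?mul0r ?xmulv0 ?mulr0.
  rewrite (sum_delta2 (H := fun x y =>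
    coef f (g ++ x :: y :: hi) * (g == lo)%:R)) //.
  (* R may be the zero ring: a nonzero summand is what forces 1 != 0. *)
  move=> nz; apply: Ucont; rewrite U_col0 !eqxx; change ((1 : R) != 0).
  apply: contraNneq nz => one_eq0; apply/eqP.
  by rewrite -[LHS]mulr1 one_eq0 mulr0.
by rewrite sum_seq_mul_eq count_box.
Qed.

Lemma coef_shift0 lo t : coef f (lo ++ 0%N :: t) = coef f (lo ++ t).
Proof.
elim: t lo => [|x t IH] lo; first by rewrite cats0 -(coef_cat_nseq0 f lo 1).
by rewrite -coef_swap0 -cat_rcons IH cat_rcons.
Qed.

Lemma coef_filter0 e : coef f e = coef f [seq x <- e | x != 0%N].
Proof.
suff filter0 lo : coef f (lo ++ e) = coef f (lo ++ [seq x <- e | x != 0%N]).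
  exact: (filter0 [::]).
elim: e lo => [|x e IH] lo //=.
case: eqP => [->|_]; first by rewrite coef_shift0 IH.
by rewrite -!cat_rcons IH.
Qed.
End Symmetric.
End TriangularStructure.

Theorem mainTheorem10 (R : pzRingType) (phi : nat -> R -> R)
    (U : nat -> nat -> nat -> nat -> R) (Ubd : nat -> nat -> nat) :
  B_module_algebra phi ->
  strict_triangular phi U Ubd ->
  forall f : seq nat -> R, in_Sym phi U Ubd f -> in_QSym f.
Proof.
move=> [phi0_id phi_additive _ phi_1].
move=> [[Ucont [_ [_ [_ [[Ups_mu12 Ups_mu23] [[Ups_unitL Ups_unitR] U11_axis]]]]]] _].
move=> f f_sym; exists (coef f) => e.
set s := [seq x <- e | x != 0%N].
transitivity (\sum_(J <- comps (sumn s)) coef f J * (J == s)%:R).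
  rewrite sum_seq_mul_eq count_comps ?all_pos_filter_neq0 // mulr1n.
  exact: (coef_filter0 phi0_id phi_additive phi_1 Ucont Ups_unitL Ups_unitR
                       Ups_mu12 Ups_mu23 U11_axis f_sym).
rewrite {2}/coef /qsym_comb sumn_canon /s sumn_filter_neq0.
by apply: eq_bigr => J _; rewrite /mono filter_canon eq_sym; case: eqP.
Qed.
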